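(* Let $\rho$ be an odd prime with $\rho\equiv\pm5\pmod{12}$ and $\mathrm{ord}_\rho(3)=\rho-1$, let $m=\rho-1$, let $\alpha$ be a primitive element of $\mathrm{GF}(3^m)$, $\beta=\alpha^{(3^m-1)/(4\rho)}$ and $\theta=\beta^{-1}$. Let $\mathcal{C}(\rho)$ be the ternary negacyclic code of length $2\rho$ whose check polynomial is the minimal polynomial of $\beta$ over $\mathrm{GF}(3)$; equivalently $$\mathcal{C}(\rho)=\left\{\left(\mathrm{Tr}_{3^m/3}(a\theta^i)\right)_{i=0}^{2\rho-1}: a\in\mathrm{GF}(3^m)\right\}.$$ Let $\overline{\mathcal{C}}(\rho)=\{(\mathrm{Tr}_{3^m/3^2}(a\theta^{2i}))_{i=0}^{\rho-1}: a\in\mathrm{GF}(3^m)\}$ (a linear code over $\mathrm{GF}(9)$). Then $\mathcal{C}(\rho)$ has parameters $[2\rho,\rho-1,d]$ where $d\ge d(\overline{\mathcal{C}}(\rho))\ge\sqrt{\rho}+1$.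
   Context: A ternary negacyclic code of length $n$ is an ideal of $\mathrm{GF}(3)[x]/(x^n+1)$ (codewords $(c_0,\dots,c_{n-1})\leftrightarrow\sum c_ix^i$); its check polynomial is $(x^n+1)/g(x)$, where $g$ is its monic generator polynomial. $\mathrm{Tr}_{3^m/3^k}$ denotes the trace from $\mathrm{GF}(3^m)$ to $\mathrm{GF}(3^k)$. $d(\cdot)$ is the minimum Hamming distance; $[n,k,d]$ denotes length, dimension, minimum distance. *)

From HB Require Import structures.
From mathcomp Require Import all_boot all_order all_algebra all_field.
Set Implicit Arguments. Unset Strict Implicit. Unset Printing Implicit Defensive.
Import Order.TTheory GRing.Theory Num.Theory.
Local Open Scope ring_scope.

Definition has_order_mod (r a k : nat) : Prop :=
  (0 < k)%N /\ (a ^ k = 1 %[mod r])%N /\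
  (forall j : nat, (0 < j < k)%N -> (a ^ j <> 1 %[mod r])%N).

Definition trace_to (F : finFieldType) (q m : nat) (x : F) : F :=
  \sum_(j < m) x ^+ (q ^ j).

Definition hwt (F : finFieldType) (n : nat) (w : {ffun 'I_n -> F}) : nat :=
  #|[set i | w i != 0]|.

(* minimum distance = minimum weight of a nonzero codeword (default n if none) *)
Definition min_dist (F : finFieldType) (n : nat) (C : {set {ffun 'I_n -> F}}) : nat :=
  \big[minn/n]_(c in C | c != 0) hwt c.

Definition code_C (F : finFieldType) (rho m : nat) (theta : F) : {set {ffun 'I_(2 * rho) -> F}} :=
  [set [ffun i : 'I_(2 * rho) => trace_to 3 m (a * theta ^+ i)] | a : F].

Definition code_Cbar (F : finFieldType) (rho m : nat) (theta : F) : {set {ffun 'I_rho -> F}} :=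
  [set [ffun i : 'I_rho => trace_to 9 (m %/ 2) (a * theta ^+ (2 * i))] | a : F].

From HB Require Import structures.
From mathcomp Require Import all_boot all_order all_algebra all_field.
From mathcomp Require Import ring zify.
Import Order.TTheory GRing.Theory Num.Theory.
Local Open Scope ring_scope.
Set Implicit Arguments. Unset Strict Implicit. Unset Printing Implicit Defensive.

(* The entries of a word of Cbar(rho) are, up to sign, the values f(k) = T(a delta^k),
   k in F_rho, where T = Tr_{3^m/9} and delta = -theta^2 has order rho.  Expanding T,
   f(k) = sum_t a^(9^t) psi(9^t k) for the additive character psi(k) = delta^k, i.e. f
   only has frequencies that are quadratic residues.  If f(0) <> 0, the Fourier
   transform of u(k) = chi(k) f(-1/k) is a combination of Salie sums and vanishes at
   every s with chi(-s) = -1.  Since 3 is a non-residue, the convolution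
   sum_j u(s - 3j) u(j) has transform supported at 0: it is a nonzero constant, so
   supp u + 3 supp u = F_rho and rho <= (wt - 1)^2.
   A word of C(rho) has entries y + y^3 at i and iota (y - y^3) at i + rho, where
   y = T(a theta^i) and iota = theta^rho is a square root of -1; both vanish only if
   y = 0, whence wt C >= wt Cbar.  Finally Fourier inversion at -1 shows that a word of
   Cbar(rho) vanishes only for a = 0, because 9^t = 1 mod rho only for t = 0. *)

Section Weights.
Variables (F : finFieldType) (n : nat).
Implicit Types (w : {ffun 'I_n -> F}) (C : {set {ffun 'I_n -> F}}).

Lemma hwt_eq0 w : (hwt w == 0%N) = (w == 0).
Proof.
rewrite /hwt cards_eq0; apply/eqP/eqP => [w0 | ->].
  by apply/ffunP => i; rewrite ffunE; apply/eqP; have := in_set0 i; rewrite -w0 inE => /negbFE.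
by apply/setP => i; rewrite !inE ffunE eqxx.
Qed.

Lemma min_dist_ind (P : pred nat) C :
  P n -> (forall c, c \in C -> c != 0 -> P (hwt c)) -> P (min_dist C).
Proof.
move=> Pn PC; rewrite /min_dist; elim/big_rec: _ => // c x /andP[cC c0] Px.
by rewrite /minn; case: ifP => _; [apply: PC|].
Qed.

Lemma min_dist_le_length C : (min_dist C <= n)%N.
Proof.
apply: (@min_dist_ind (fun d => d <= n)%N) => // c _ _.
by rewrite -[X in (_ <= X)%N]card_ord max_card.
Qed.

Lemma min_dist_le C c : c \in C -> c != 0 -> (min_dist C <= hwt c)%N.
Proof.
move=> cC c0; rewrite /min_dist; have : c \in index_enum {ffun 'I_n -> F} by rewrite mem_index_enum.
elim: (index_enum _) => // c' s IH; rewrite inE big_cons => /orP[/eqP <- | cs].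
  by rewrite cC c0 geq_minl.
by case: ifP => _; [apply: leq_trans (geq_minr _ _) (IH cs) | exact: IH].
Qed.

End Weights.

Section Traces.
Variables (F : finFieldType) (q : nat).
Hypothesis q_pchar : [pchar F].-nat q.

Lemma trace_to_scale n (c x : F) :
  c ^+ q = c -> trace_to q n (c * x) = c * trace_to q n x.
Proof.
move=> cq; rewrite /trace_to mulr_sumr; apply: eq_bigr => j _; rewrite exprMn.
by congr (_ * _); elim: (val j) => [|k IH]; rewrite ?expr1 // expnSr exprM IH.
Qed.

Lemma trace_toD n (x y : F) : trace_to q n (x + y) = trace_to q n x + trace_to q n y.
Proof.
rewrite /trace_to -big_split; apply: eq_bigr => j _.
by rewrite exprDn_pchar // pnatX q_pchar.
Qed.

Lemma trace_toB n (x y : F) : trace_to q n (x - y) = trace_to q n x - trace_to q n y.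
Proof. by apply: (canRL (addrK _)); rewrite -trace_toD subrK. Qed.

Lemma trace_to0 n : trace_to q n (0 : F) = 0.
Proof. by rewrite -[0 in LHS](subrr 0) trace_toB subrr. Qed.

Lemma trace_to_double n (x : F) :
  trace_to q n.*2 x = trace_to (q ^ 2) n x + trace_to (q ^ 2) n x ^+ q.
Proof.
rewrite /trace_to -(big_mkord xpredT (fun j => x ^+ (q ^ j))).
rewrite -(big_mkord xpredT (fun j => x ^+ ((q ^ 2) ^ j))).
elim: n => [|n IH].
  by rewrite !big_geq // expr0n gtn_eqF ?add0r //; case/andP: q_pchar.
rewrite doubleS !big_nat_recr //= IH.
by rewrite exprDn_pchar // -expnM mul2n -exprM -expnSr -addrA addrACA.
Qed.

End Traces.

Lemma val_Fp_natM p c (x : 'F_p) : prime p -> nat_of_ord (c%:R * x) = (c * x %% p)%N.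
Proof. by move=> p_prime; rewrite -[x in LHS]natr_Zp -natrM val_Fp_nat. Qed.

Section Characters.
Variables (p : nat) (F : fieldType).
Hypotheses (p_prime : prime p) (p_odd : odd p).

Local Notation h := (p.-1)./2.

Lemma Fp_exp_half (x : 'F_p) : x != 0 -> (x ^+ h == 1) || (x ^+ h == -1).
Proof.
have hK : h.*2 = p.-1 by have := prime_gt0 p_prime; move: p_odd; lia.
move=> x0; rewrite -sqrf_eq1 -exprM muln2 hK.
apply/eqP/(mulIf x0); rewrite mul1r -exprSr prednK ?prime_gt0 //.
by rewrite -[in X in x ^+ X](card_Fp p_prime) expf_card.
Qed.

Lemma Fp_Nneq1 : (-1 : 'F_p) != 1.
Proof.
rewrite -subr_eq0 -opprD oppr_eq0 -(natrD _ 1 1) -(dvdn_pcharf (pchar_Fp p_prime)).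
by apply/negP => /dvdn_leq; have := prime_gt1 p_prime; move: p_odd; lia.
Qed.

Definition legendre (x : 'F_p) : F := if x == 0 then 0 else if x ^+ h == 1 then 1 else -1.

Lemma legendre0 : legendre 0 = 0. Proof. by rewrite /legendre eqxx. Qed.

Lemma legendre1 : legendre 1 = 1. Proof. by rewrite /legendre oner_eq0 expr1n eqxx. Qed.

Lemma legendre_pm x : x != 0 -> legendre x = 1 \/ legendre x = -1.
Proof. by rewrite /legendre => /negbTE->; case: ifP; [left | right]. Qed.

Lemma legendre_eq0 x : (legendre x == 0) = (x == 0).
Proof.
have [-> | x0] := eqVneq x 0; first by rewrite legendre0 eqxx.
by case: (legendre_pm x0) => ->; rewrite ?oppr_eq0 oner_eq0.
Qed.

Lemma legendreM x y : legendre (x * y) = legendre x * legendre y.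
Proof.
rewrite /legendre mulf_eq0; have [-> | x0] := eqVneq x 0; first by rewrite !mul0r.
have [-> | y0] := eqVneq y 0; first by rewrite orbT !mulr0.
rewrite /= exprMn.
case/orP: (Fp_exp_half x0) => /eqP->; case/orP: (Fp_exp_half y0) => /eqP->;
  by rewrite ?mulr1 ?mul1r ?mulrNN ?mulr1 ?eqxx ?(negbTE Fp_Nneq1) ?mulrNN ?mulr1.
Qed.

Lemma legendre_sqr x : x != 0 -> legendre x * legendre x = 1.
Proof. by case/legendre_pm => ->; rewrite ?mulr1 ?mulrNN ?mulr1. Qed.

Lemma legendreN x : legendre (- x) = legendre (-1) * legendre x.
Proof. by rewrite -legendreM mulN1r. Qed.

Lemma legendreV x : legendre x^-1 = legendre x.
Proof.
have [-> | x0] := eqVneq x 0; first by rewrite invr0.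
apply: (@mulfI _ (legendre x)); first by rewrite legendre_eq0.
by rewrite -legendreM mulfV // legendre1 legendre_sqr.
Qed.

Variable z : F.
Hypotheses (z_p : z ^+ p = 1) (z_neq1 : z != 1).

Local Notation N := (Zp_trunc (pdiv p)).+2.

Let z_N : z ^+ N = 1. Proof. by rewrite Fp_cast. Qed.

Definition psi (x : 'F_p) : F := z ^+ x.

Lemma psi0 : psi 0 = 1. Proof. exact: expr0. Qed.

Lemma psiD x y : psi (x + y) = psi x * psi y.
Proof. by rewrite /psi -exprD /= (expr_mod _ z_N). Qed.

Lemma psi_natM k (x : 'F_p) : psi (k%:R * x) = z ^+ (k * x).
Proof. by rewrite /psi val_Fp_natM // (expr_mod _ z_p). Qed.

Lemma sum_psiM s : \sum_x psi (x * s) = (s == 0)%:R * p%:R.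
Proof.
have [-> | s0] := eqVneq s 0.
  by under eq_bigr do rewrite mulr0 psi0; rewrite sumr_const card_Fp // mul1r.
rewrite mul0r -(reindex_inj (mulIf s0) (P := xpredT) (F := psi)) /=; apply/eqP.
have : (z - 1) * \sum_(i < N) z ^+ i == 0 by rewrite -subrX1 z_N subrr.
by rewrite mulf_eq0 subr_eq0 (negbTE z_neq1).
Qed.

Definition dft (g : 'F_p -> F) (s : 'F_p) : F := \sum_k g k * psi (s * k).

Definition qr_sum n (q : 'I_n -> 'F_p) (b : 'I_n -> F) (k : 'F_p) : F :=
  \sum_i b i * psi (q i * k).

Lemma dft_inversion g t : \sum_s dft g s * psi (s * - t) = p%:R * g t.
Proof.
rewrite /dft; under eq_bigr do rewrite mulr_suml.
rewrite exchange_big (bigD1 t) //= [X in _ + X]big1 ?addr0 => [|k kt].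
all: under eq_bigr do rewrite -mulrA -psiD -mulrDr.
all: rewrite -mulr_sumr sum_psiM subr_eq0.
  by rewrite eqxx mul1r mulrC.
by rewrite (negbTE kt) mul0r mulr0.
Qed.

Lemma dft_qr_sum n (q : 'I_n -> 'F_p) b s :
  dft (qr_sum q b) s = p%:R * \sum_(i | q i == - s) b i.
Proof.
rewrite /dft /qr_sum; under eq_bigr do rewrite mulr_suml.
rewrite exchange_big [in RHS]big_mkcond [RHS]mulr_sumr; apply: eq_bigr => i _.
under eq_bigr => k _ do rewrite -mulrA -psiD -mulrDl [_ * k]mulrC.
by rewrite -mulr_sumr sum_psiM addr_eq0; case: eqP; rewrite ?mul1r ?mul0r ?mulr0 // mulrC.
Qed.

Lemma qr_sum_shift n (q : 'I_n -> 'F_p) b k0 k :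
  qr_sum q b (k0 + k) = qr_sum q (fun i => b i * psi (q i * k0)) k.
Proof. by apply: eq_bigr => i _; rewrite mulrDr psiD mulrA. Qed.

Section OddCharacteristic.
Hypothesis two_neq0 : (2%:R : F) != 0.

Let eq_oppr_eq0 (x : F) : x = - x -> x = 0.
Proof.
move=> xN; apply/eqP; have : 2%:R * x == 0 by rewrite mulr_natl mulr2n {1}xN addNr.
by rewrite mulf_eq0 (negbTE two_neq0).
Qed.

Lemma salie_eq0 a c : legendre (a * c) = -1 -> \sum_k legendre k * psi (a * k^-1 + c * k) = 0.
Proof.
move=> ac_nonres; have [a0 c0] : a != 0 /\ c != 0.
  by apply/andP; rewrite -negb_or -mulf_eq0 -legendre_eq0 ac_nonres oppr_eq0 oner_eq0.
pose phi k := a * (c * k)^-1.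
have phiK : involutive phi.
  move=> k; rewrite /phi; have [-> | k0] := eqVneq k 0; first by rewrite !(mulr0, invr0).
  by field; rewrite a0 c0 k0.
apply: eq_oppr_eq0; rewrite {1}(reindex_inj (can_inj phiK)) -sumrN; apply: eq_bigr => k _.
have [-> | k0] := eqVneq k 0; first by rewrite /phi !(mulr0, invr0, legendre0, mul0r, oppr0).
rewrite /phi legendreM legendreV legendreM mulrA -legendreM ac_nonres mulN1r mulNr.
by congr (- (_ * psi _)); field; rewrite a0 c0 k0.
Qed.

Variable r : 'F_p.
Hypothesis r_nonres : legendre r = -1.

Lemma sum_legendre : \sum_x legendre x = 0.
Proof.
have r0 : r != 0 by rewrite -legendre_eq0 r_nonres oppr_eq0 oner_eq0.
apply: eq_oppr_eq0; rewrite {1}(reindex_inj (mulfI r0)) -mulN1r mulr_sumr /=.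
by apply: eq_bigr => x _; rewrite legendreM r_nonres.
Qed.

Definition gauss := \sum_k legendre k * psi k.

Lemma sum_legendre_psi_inv c : c != 0 -> \sum_k legendre k * psi (c * k^-1) = legendre c * gauss.
Proof.
move=> c0; pose phi k := c * k^-1.
have phiK : involutive phi.
  move=> k; rewrite /phi; have [-> | k0] := eqVneq k 0; first by rewrite !(mulr0, invr0).
  by field; rewrite c0 k0.
rewrite (reindex_inj (can_inj phiK)) /gauss mulr_sumr; apply: eq_bigr => k _.
rewrite /phi legendreM legendreV mulrA; congr (_ * psi _).
have [-> | k0] := eqVneq k 0; first by rewrite !(mulr0, invr0).
by field; rewrite c0 k0.
Qed.

Lemma gauss_sqr : gauss * gauss = legendre (-1) * p%:R.
Proof.
have -> : gauss * gauss = \sum_x \sum_t legendre t * psi (x * (1 + t)).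
  rewrite /gauss mulr_suml; apply: eq_bigr => x _; rewrite mulr_sumr.
  have [-> | x0] := eqVneq x 0.
    rewrite legendre0 big1 => [|t _]; last by rewrite !mul0r.
    by under eq_bigr do rewrite mul0r psi0 mulr1; rewrite sum_legendre.
  rewrite (reindex_inj (mulfI x0)); apply: eq_bigr => t _.
  by rewrite legendreM mulrDr mulr1 psiD mulrACA (mulrA (legendre x)) (legendre_sqr x0) mul1r.
rewrite exchange_big (bigD1 (-1)) //= [X in _ + X]big1 ?addr0 => [|t t_neqN1].
  by rewrite -mulr_sumr sum_psiM addrN eqxx mul1r.
by rewrite -mulr_sumr sum_psiM addrC addr_eq0 (negbTE t_neqN1) mul0r mulr0.
Qed.

Hypothesis p_neq0 : (p%:R : F) != 0.

Lemma gauss_neq0 : gauss != 0.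
Proof.
apply/eqP => g0; move/eqP: gauss_sqr; rewrite g0 mul0r eq_sym mulf_eq0 (negbTE p_neq0).
by rewrite legendre_eq0 oppr_eq0 oner_eq0.
Qed.

Section ResidueSum.
Variables (n : nat) (q : 'I_n -> 'F_p) (b : 'I_n -> F).
Hypothesis q_res : forall i, legendre (q i) = 1.

Local Notation f := (qr_sum q b).

Let q_neq0 i : q i != 0.
Proof. by rewrite -legendre_eq0 q_res oner_eq0. Qed.

Let twist k := legendre k * f (- k^-1).

Let conv s := \sum_j twist (s - r * j) * twist j.

Lemma dft_twist_nonres s : legendre (- s) = -1 -> dft twist s = 0.
Proof.
move=> s_nonres; rewrite /dft /twist /qr_sum.
under eq_bigr do rewrite mulr_sumr mulr_suml.
rewrite exchange_big big1 // => i _.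
transitivity (b i * \sum_k legendre k * psi (- q i * k^-1 + s * k)).
  by rewrite mulr_sumr; apply: eq_bigr => k _; rewrite psiD mulNr mulrN; ring.
by rewrite salie_eq0 ?mulr0 // mulNr -mulrN legendreM q_res s_nonres mul1r.
Qed.

Lemma dft_twist0 : dft twist 0 = legendre (-1) * gauss * f 0.
Proof.
rewrite /dft /twist /qr_sum; under eq_bigr do rewrite mul0r psi0 mulr1 mulr_sumr.
rewrite exchange_big mulr_sumr; apply: eq_bigr => i _ /=.
under eq_bigr do rewrite mulrN -mulNr mulrCA.
rewrite -mulr_sumr sum_legendre_psi_inv ?oppr_eq0 // legendreN q_res.
by rewrite mulr0 psi0; ring.
Qed.

Let dft_twist0_neq0 : f 0 != 0 -> dft twist 0 != 0.
Proof.
by move=> f0; rewrite dft_twist0 !mulf_neq0 ?gauss_neq0 // legendre_eq0 oppr_eq0 oner_eq0.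
Qed.

Lemma dft_conv s : dft conv s = dft twist s * dft twist (s * r).
Proof.
rewrite /dft /conv; under eq_bigr do rewrite mulr_suml.
rewrite exchange_big mulr_sumr; apply: eq_bigr => j _.
rewrite (reindex_inj (addIr (r * j))) mulr_suml; apply: eq_bigr => k _ /=.
by rewrite addrK mulrDr psiD (mulrA s); ring.
Qed.

Lemma conv_const s : p%:R * conv s = dft twist 0 ^+ 2.
Proof.
rewrite -dft_inversion (bigD1 0) //= [X in _ + X]big1 ?addr0 => [|m m0].
  by rewrite dft_conv mul0r mul0r psi0 mulr1 expr2.
have mN0 : - m != 0 by rewrite oppr_eq0.
rewrite dft_conv; have [m_res | m_nonres] := legendre_pm mN0; last first.
  by rewrite dft_twist_nonres // !mul0r.
rewrite [dft twist (m * r)]dft_twist_nonres ?mulr0 ?mul0r //.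
by rewrite -mulNr legendreM m_res r_nonres mul1r.
Qed.

Lemma conv_neq0 s : f 0 != 0 -> conv s != 0.
Proof.
move=> f0; apply/eqP => conv0; have := conv_const s.
by rewrite conv0 mulr0 => /esym/eqP; rewrite expf_eq0 /= (negbTE (dft_twist0_neq0 f0)).
Qed.

Lemma card_support_twist :
  f 0 != 0 -> #|[set k | twist k != 0]| = #|[set k | f k != 0]|.-1.
Proof.
move=> f0; pose g k : 'F_p := - k^-1.
have gK : involutive g by move=> k; rewrite /g invrN invrK opprK.
have -> : [set k | twist k != 0] = g @: [set k | (k != 0) && (f k != 0)].
  rewrite (can2_imset_pre _ gK gK); apply/setP => k; rewrite !inE /twist /g.
  by rewrite mulf_eq0 negb_or oppr_eq0 invr_eq0 legendre_eq0.
rewrite card_imset; last exact: can_inj gK.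
have -> : [set k | f k != 0] = 0 |: [set k | (k != 0) && (f k != 0)].
  by apply/setP => k; rewrite !inE; have [-> | k0] := eqVneq k 0; rewrite ?f0.
by rewrite cardsU1 !inE eqxx.
Qed.

Lemma qr_sum_support_bound0 : f 0 != 0 -> (p <= #|[set k | f k != 0%R]|.-1 ^ 2)%N.
Proof.
move=> f0; rewrite -card_support_twist //; set A := [set k | twist k != 0].
have cover : [set: 'F_p] \subset (fun kj => kj.1 + r * kj.2) @: setX A A.
  apply/subsetP => s _; have := conv_neq0 s f0.
  case: (pickP (fun j => twist (s - r * j) * twist j != 0)) => [j | none]; last first.
    by rewrite /conv big1 ?eqxx // => j _; apply/eqP/negbFE/none.
  rewrite mulf_eq0 negb_or => /andP[Asj Aj] _.
  by apply/imsetP; exists (s - r * j, j); rewrite ?inE ?Asj ?Aj //= subrK.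
have := subset_leq_card cover; rewrite cardsT card_Fp // => /leq_trans; apply.
by rewrite (leq_trans (leq_imset_card _ _)) // cardsX mulnn.
Qed.

End ResidueSum.

Theorem qr_sum_support_bound n (q : 'I_n -> 'F_p) b :
  (forall i, legendre (q i) = 1) -> (exists k, qr_sum q b k != 0) ->
  (p <= #|[set k | qr_sum q b k != 0%R]|.-1 ^ 2)%N.
Proof.
move=> q_res [k0 fk0].
have := @qr_sum_support_bound0 n q (fun i => b i * psi (q i * k0)) q_res.
rewrite -qr_sum_shift addr0 => /(_ fk0).
have -> : [set k | qr_sum q (fun i => b i * psi (q i * k0)) k != 0] =
          (fun k => k0 + k) @^-1: [set k | qr_sum q b k != 0].
  by apply/setP => k; rewrite !inE qr_sum_shift.
by rewrite card_preimset //; apply: addrI.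
Qed.

End OddCharacteristic.

End Characters.

Arguments legendre {p F} x.

Lemma card_ord_count n (Q : pred nat) : #|[set i : 'I_n | Q i]| = count Q (iota 0 n).
Proof.
rewrite cardsE cardE /enum_mem size_filter -val_enum_ord count_map.
by rewrite enumT; apply: eq_count => i.
Qed.

Lemma cube_pair_neq0 (F : fieldType) (c y : F) : (2%:R : F) != 0 -> c ^+ 2 = -1 -> y != 0 ->
  (y + y ^+ 3 != 0) || (c * y + (c * y) ^+ 3 != 0).
Proof.
move=> two_neq0 c2 y0; apply: contraTT y0; rewrite negb_or !negbK => /andP[/eqP s1 /eqP s2].
have c_neq0 : c != 0.
  by apply/eqP => c0; move/eqP: c2; rewrite c0 expr0n eq_sym oppr_eq0 oner_eq0.
have : 2%:R * c * y = c * (y + y ^+ 3) + (c * y + (c * y) ^+ 3).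
  by rewrite exprMn (exprS c 2) c2; ring.
by rewrite s1 s2 mulr0 addr0 => /eqP; rewrite !mulf_eq0 (negbTE two_neq0) (negbTE c_neq0).
Qed.

Lemma prim_rootV (F : fieldType) n (x : F) : n.-primitive_root x -> n.-primitive_root x^-1.
Proof.
case/andP=> n_gt0 prim; rewrite /primitive_root_of_unity n_gt0; apply: etrans prim.
by apply: eq_forallb => i; rewrite !unity_rootE exprVn invr_eq1.
Qed.

Section NegacyclicCode.
Variables (rho : nat) (F : finFieldType) (theta : F).
Hypotheses (rho_prime : prime rho) (rho_gt3 : (3 < rho)%N).
Hypotheses (ord3 : has_order_mod rho 3 rho.-1) (cardF : #|F| = (3 ^ rho.-1)%N).
Hypothesis theta_prim : (4 * rho).-primitive_root theta.

Local Notation m := rho.-1.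
Local Notation T := (trace_to 9 (m %/ 2)).
Local Notation nzT a := (fun j : nat => T (a * theta ^+ j) != 0).

Let rho_odd : odd rho.
Proof. by case: (even_prime rho_prime) => // rho2; move: rho_gt3; rewrite rho2. Qed.

Let pchar3 : 3 \in [pchar F].
Proof. exact: card_finPcharP cardF _. Qed.

Let pchar_nat3 : [pchar F].-nat 3.
Proof. by rewrite (eq_pnat _ (pcharf_eq pchar3)) pnat_id. Qed.

Let two_neq0 : (2%:R : F) != 0.
Proof. by rewrite -(dvdn_pcharf pchar3). Qed.

Let rho_neq0 : (rho%:R : F) != 0.
Proof. by rewrite -(dvdn_pcharf pchar3) dvdn_prime2 // ltn_eqF. Qed.

Let count_Fp (Q : pred nat) : #|[set k : 'F_rho | Q k]| = count Q (iota 0 rho).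
Proof. by rewrite card_ord_count Fp_cast. Qed.

Lemma trace3_split (x : F) : trace_to 3 m x = T x + T x ^+ 3.
Proof.
have m_double : m = (m %/ 2).*2 by have := prime_gt0 rho_prime; move: rho_odd; lia.
by rewrite {1}m_double (trace_to_double pchar_nat3).
Qed.

Lemma theta_2rho : theta ^+ (2 * rho) = -1.
Proof.
have : (theta ^+ (2 * rho)) ^+ 2 == 1.
  by rewrite -exprM (_ : 2 * rho * 2 = 4 * rho)%N ?prim_expr_order //; lia.
rewrite sqrf_eq1 -(prim_order_dvd theta_prim) => /orP[/dvdn_leq | /eqP //].
by have := prime_gt0 rho_prime; lia.
Qed.

Lemma theta_rho_sqr : (theta ^+ rho) ^+ 2 = -1.
Proof. by rewrite -exprM mulnC theta_2rho. Qed.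

Lemma theta_rho_pow9 : (theta ^+ rho) ^+ 9 = theta ^+ rho.
Proof.
rewrite -exprM -(prim_expr_mod theta_prim) (_ : rho * 9 = 2 * (4 * rho) + rho)%N; last by lia.
by rewrite modnMDl prim_expr_mod.
Qed.

Definition delta := - theta ^+ 2.

Lemma delta_rho : delta ^+ rho = 1.
Proof. by rewrite /delta exprNn -exprM theta_2rho -signr_odd rho_odd mulrNN mulr1. Qed.

Lemma delta_neq1 : delta != 1.
Proof.
apply/eqP => delta1; have theta2 : theta ^+ 2 = -1 by rewrite -[theta ^+ 2]opprK -/delta delta1.
have : theta ^+ (2 * 2) == 1 by rewrite exprM theta2 sqrrN expr1n.
by rewrite -(prim_order_dvd theta_prim) => /dvdn_leq; have := prime_gt0 rho_prime; lia.
Qed.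

Lemma T_theta_shift a j : T (a * theta ^+ (j + rho)) = theta ^+ rho * T (a * theta ^+ j).
Proof. by rewrite -trace_to_scale ?theta_rho_pow9 // exprD mulrA mulrC. Qed.

Lemma T_theta_mod a j : (T (a * theta ^+ (j %% rho)) != 0) = (T (a * theta ^+ j) != 0).
Proof.
have theta_rho_neq0 : theta ^+ rho != 0.
  by rewrite expf_neq0 // (prim_root_eq0 theta_prim); have := prime_gt0 rho_prime; lia.
rewrite {2}(divn_eq j rho) addnC; elim: (j %/ rho)%N => [|k IH]; first by rewrite mul0n addn0.
by rewrite mulSn addnCA addnC T_theta_shift mulf_eq0 negb_or theta_rho_neq0.
Qed.

Lemma T_theta_double a i : (T (a * theta ^+ (2 * i)) != 0) = (T (a * delta ^+ i) != 0).
Proof.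
have -> : theta ^+ (2 * i) = (-1) ^+ i * delta ^+ i by rewrite -exprNn opprK exprM.
have sign9 : ((-1) ^+ i) ^+ 9 = (-1) ^+ i :> F by rewrite -exprM mulnC exprM -signr_odd.
by rewrite mulrCA [in LHS]trace_to_scale // mulf_eq0 signr_eq0.
Qed.

Definition nine_pow (t : 'I_(m %/ 2)) : 'F_rho := (9 ^ t)%:R.

Lemma T_psi a k : T (a * psi delta k) = qr_sum delta nine_pow (fun t => a ^+ (9 ^ t)) k.
Proof.
apply: eq_bigr => t _; rewrite /nine_pow (psi_natM rho_prime delta_rho) exprMn; congr (_ * _).
by rewrite -exprM mulnC.
Qed.

Let three_pow_neq0 t : ((3 ^ t)%:R : 'F_rho) != 0.
Proof. by rewrite -(dvdn_pcharf (pchar_Fp rho_prime)) Euclid_dvdX // gtnNdvd. Qed.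

Lemma legendre_nine_pow t : legendre (nine_pow t) = 1 :> F.
Proof.
rewrite /nine_pow (_ : 9 ^ t = 3 ^ t * 3 ^ t)%N; last by rewrite -expnMn.
by rewrite natrM legendreM // legendre_sqr.
Qed.

Lemma legendre3 : legendre (3%:R : 'F_rho) = -1 :> F.
Proof.
case: ord3 => _ [_ ord3_min]; rewrite /legendre (negbTE (three_pow_neq0 1)) -natrX.
case: ifP => // /eqP/(congr1 (@nat_of_ord _)); rewrite !val_Fp_nat // => three_half.
exfalso; apply: (ord3_min m./2); last by rewrite three_half modn_small ?prime_gt1.
by have := rho_gt3; move: rho_odd; lia.
Qed.

Lemma nine_pow_eq1 t : (nine_pow t == 1) = (t == 0 :> nat).
Proof.
case: ord3 => _ [_ ord3_min]; rewrite /nine_pow.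
apply/eqP/eqP => [| ->]; last by rewrite expn0.
move/(congr1 (@nat_of_ord _)); rewrite !val_Fp_nat // (_ : 9 = 3 ^ 2)%N // -expnM => nine1.
case: (posnP t) => // t_gt0; exfalso; apply: (ord3_min (2 * t)%N).
  by have := ltn_ord t; lia.
by rewrite nine1 modn_small ?prime_gt1.
Qed.

Definition wordC a := [ffun i : 'I_(2 * rho) => trace_to 3 m (a * theta ^+ i)].
Definition wordCbar a := [ffun i : 'I_rho => T (a * theta ^+ (2 * i))].

Lemma wordCbar_eq0 a : wordCbar a = 0 -> a = 0.
Proof.
move=> cb0; have half_gt0 : (0 < m %/ 2)%N by have := rho_gt3; lia.
have f0 k : qr_sum delta nine_pow (fun t => a ^+ (9 ^ t)) k = 0.
  have k_lt : (k < rho)%N by apply: leq_trans (ltn_ord k) _; rewrite Fp_cast.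
  move/ffunP/(_ (Ordinal k_lt)): cb0; rewrite !ffunE /= => entry0.
  by apply/eqP; rewrite -T_psi; apply/negbFE; rewrite /psi -T_theta_double entry0 eqxx.
have := dft_qr_sum rho_prime delta_rho delta_neq1 nine_pow (fun t => a ^+ (9 ^ t)) (-1).
rewrite /dft big1 => [|k _]; last by rewrite f0 mul0r.
rewrite opprK (big_pred1 (Ordinal half_gt0)) => [|t]; last by rewrite nine_pow_eq1.
by rewrite expr1 => /esym/eqP; rewrite mulf_eq0 (negbTE rho_neq0) => /eqP.
Qed.

Lemma hwt_wordCbar a :
  hwt (wordCbar a) = #|[set k | qr_sum delta nine_pow (fun t => a ^+ (9 ^ t)) k != 0]|.
Proof.
have -> : [set k | qr_sum delta nine_pow (fun t => a ^+ (9 ^ t)) k != 0] =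
          [set k : 'F_rho | T (a * delta ^+ k) != 0] by apply/setP => k; rewrite !inE -T_psi.
rewrite (count_Fp (fun j => T (a * delta ^+ j) != 0)) -card_ord_count.
by apply: eq_card => i; rewrite !inE ffunE T_theta_double.
Qed.

Lemma hwt_wordCbar_count a : hwt (wordCbar a) = count (nzT a) (iota 0 rho).
Proof.
have two_Fp : (2%:R : 'F_rho) != 0.
  by rewrite -(dvdn_pcharf (pchar_Fp rho_prime)) gtnNdvd // ltnW.
rewrite -(count_Fp (nzT a)) -(card_preimset _ (mulfI two_Fp)).
transitivity #|[set k : 'F_rho | T (a * theta ^+ (2 * k)) != 0]|.
  rewrite (count_Fp (fun j => T (a * theta ^+ (2 * j)) != 0)) -card_ord_count.
  by apply: eq_card => i; rewrite !inE ffunE.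
by apply: eq_card => k; rewrite !inE (val_Fp_natM 2) // T_theta_mod.
Qed.

Lemma count_le_hwt_wordC (a : F) :
  (count (nzT a) (iota 0 rho) <= hwt (wordC a))%N.
Proof.
pose Z (j : nat) := trace_to 3 m (a * theta ^+ j) != 0.
have -> : hwt (wordC a) = count Z (iota 0 (rho + rho)).
  by rewrite addnn -mul2n -card_ord_count; apply: eq_card => i; rewrite !inE ffunE.
have -> : iota 0 (rho + rho) = iota 0 rho ++ map (addn rho) (iota 0 rho).
  by rewrite iotaD -iotaDl addn0.
rewrite count_cat count_map -count_predUI.
apply: leq_trans (leq_addr _ _); apply: sub_count => j nzj /=.
rewrite /Z !trace3_split addnC T_theta_shift.
exact: cube_pair_neq0 two_neq0 theta_rho_sqr nzj.
Qed.

Lemma hwt_wordCbar_le a : (hwt (wordCbar a) <= hwt (wordC a))%N.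
Proof. by rewrite hwt_wordCbar_count count_le_hwt_wordC. Qed.

Lemma wordC_inj : injective wordC.
Proof.
move=> a b eq_ab; apply/eqP; rewrite -subr_eq0; apply/eqP/wordCbar_eq0/eqP.
rewrite -hwt_eq0 -leqn0 (leq_trans (hwt_wordCbar_le _)) // leqn0 hwt_eq0.
apply/eqP/ffunP => i; move/ffunP/(_ i): eq_ab; rewrite !ffunE mulrBl trace_toB // => ->.
exact: subrr.
Qed.

Lemma card_code_C : #|code_C rho m theta| = (3 ^ m)%N.
Proof. by rewrite card_imset ?cardF //; exact: wordC_inj. Qed.

Lemma min_dist_Cbar_le_C : (min_dist (code_Cbar rho m theta) <= min_dist (code_C rho m theta))%N.
Proof.
apply: min_dist_ind => [|_ /imsetP[a _ ->] c0].
  by apply: leq_trans (min_dist_le_length _) _; rewrite leq_pmull.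
apply: leq_trans (min_dist_le _ _) (hwt_wordCbar_le a); first by apply/imsetP; exists a.
apply: contra_neq c0 => /wordCbar_eq0 ->.
by apply/ffunP => i; rewrite !ffunE mul0r trace_to0.
Qed.

Lemma min_dist_Cbar_bound : (rho <= (min_dist (code_Cbar rho m theta)).-1 ^ 2)%N.
Proof.
apply: (min_dist_ind (P := fun d => (rho <= d.-1 ^ 2)%N)) => [|_ /imsetP[a _ ->]].
  by have := rho_gt3; nia.
change (wordCbar a != 0 -> (rho <= (hwt (wordCbar a)).-1 ^ 2)%N).
rewrite -hwt_eq0 hwt_wordCbar cards_eq0 => /set0Pn[k]; rewrite inE => fk.
apply: (qr_sum_support_bound rho_prime rho_odd delta_rho delta_neq1 two_neq0 legendre3 rho_neq0).
  exact: legendre_nine_pow.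
by exists k.
Qed.

End NegacyclicCode.

Lemma dvdn_4rho_pow3 rho : prime rho -> odd rho -> (3 ^ rho.-1 = 1 %[mod rho])%N ->
  (4 * rho %| 3 ^ rho.-1 - 1)%N.
Proof.
move=> rho_prime rho_odd ferm.
have coprime4 : coprime 4 rho by rewrite (@coprime_pexpl 2 2 rho) // coprime2n.
rewrite Gauss_dvd // -!eqn_mod_dvd ?expn_gt0 // ferm eqxx andbT.
have -> : rho.-1 = (2 * rho.-1./2)%N by have := prime_gt0 rho_prime; move: rho_odd; lia.
by rewrite expnM -modnXm /= exp1n.
Qed.

Lemma sqrtC_add1_le_nat (r w : nat) : (0 < r)%N -> (r <= w.-1 ^ 2)%N ->
  sqrtC (r%:R : algC) + 1 <= w%:R.
Proof.
move=> r_gt0 r_le; have w_gt0 : (0 < w)%N by case: w r_le => //; rewrite exp0n //; lia.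
have -> : (w%:R : algC) = w.-1%:R + 1 by rewrite natr1 prednK.
rewrite lerD2r -[X in _ <= X](@sqrCK _ w.-1%:R) ?ler0n //.
by rewrite ler_sqrtC ?nnegrE ?ler0n ?exprn_ge0 // -natrX ler_nat.
Qed.

Theorem theorem11 (rho : nat) (F : finFieldType) (alpha : F) :
  prime rho -> odd rho -> (rho %% 12 = 5 \/ rho %% 12 = 7)%N ->
  has_order_mod rho 3 rho.-1 ->
  #|F| = (3 ^ rho.-1)%N ->
  (#|F|.-1).-primitive_root alpha ->
  let m := rho.-1 in
  let beta := alpha ^+ ((3 ^ m - 1) %/ (4 * rho)) in
  let theta := beta^-1 in
  #|code_C rho m theta| = (3 ^ (rho.-1))%N /\
  (min_dist (code_Cbar rho m theta) <= min_dist (code_C rho m theta))%N /\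
  sqrtC (rho%:R : algC) + 1 <= (min_dist (code_Cbar rho m theta))%:R.
Proof.
move=> rho_prime rho_odd rho_mod12 ord3 cardF alpha_prim m beta theta.
have rho_gt3 : (3 < rho)%N by case: rho_mod12; lia.
have theta_prim : (4 * rho).-primitive_root theta.
  have dvd4rho : (4 * rho %| #|F|.-1)%N.
    by rewrite cardF -subn1 dvdn_4rho_pow3 //; case: ord3 => _ [].
  by have := dvdn_prim_root alpha_prim dvd4rho; rewrite cardF -subn1 => /prim_rootV.
split; first exact: card_code_C.
split; first exact: min_dist_Cbar_le_C.
apply: sqrtC_add1_le_nat (prime_gt0 rho_prime) _; exact: min_dist_Cbar_bound.
Qed.
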